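(* If $M$ is a finite monoid, then the poset $\mathscr{II}(M)$ of two-sided idempotent ideals of $M$, ordered by inclusion, is a distributive lattice, with join $I\vee J=I\cup J$ and meet $I\wedge J=\bigcup_e MeM$ ($e$ ranging over idempotents in $I\cap J$); i.e. $I\wedge(J\cup K)=(I\wedge J)\cup(I\wedge K)$ for all $I,J,K\in\mathscr{II}(M)$.
   Context: A two-sided ideal $I$ (possibly empty) is idempotent if $I=I^2=\{xy\mid x,y\in I\}$. *)

From mathcomp Require Import all_boot.
Set Implicit Arguments. Unset Strict Implicit. Unset Printing Implicit Defensive.

Definition is_monoid (T : Type) (mul : T -> T -> T) (one : T) : Prop :=
  [/\ associative mul, left_id one mul & right_id one mul].

Section Ideals.
Variables (T : finType) (mul : T -> T -> T).

(* two-sided ideal (possibly empty) *)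
Definition two_sided_ideal (I : {set T}) : Prop :=
  forall x m, x \in I -> mul m x \in I /\ mul x m \in I.

Definition set_square (I : {set T}) : {set T} :=
  [set mul x y | x in I, y in I].

Definition idempotent_ideal (I : {set T}) : Prop :=
  two_sided_ideal I /\ I = set_square I.

Definition principal_ideal (e : T) : {set T} :=
  [set mul (mul m e) n | m in T, n in T].

Definition ii_meet (I J : {set T}) : {set T} :=
  \bigcup_(e in I :&: J | mul e e == e) principal_ideal e.

End Ideals.

From mathcomp Require Import all_boot.
From mathcomp Require Import zify.

Set Implicit Arguments.
Unset Strict Implicit.
Unset Printing Implicit Defensive.

(* The only non-formal ingredient is that every element x of an idempotent
   ideal I lies in M e M for some idempotent e of I.  Since I = I^2, every
   left factor a of x inside I factors again as a = b s with b, s in I; by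
   finiteness this descent must loop, giving a = a s with s in I, and then
   a = a e for the idempotent power e of s, so x = a c = (a e) c is in M e M. *)

Lemma finite_sequence_repeats (T : finType) (f : nat -> T) :
  exists i j, i < j /\ f i = f j.
Proof.
pose g (k : 'I_#|T|.+1) := f k.
have [/injectiveP g_inj | /injectivePn [x [y x_neq_y gxy]]] := boolP (injectiveb g).
  by have := leq_card _ g_inj; rewrite card_ord ltnn.
case: (ltngtP x y) => [lt_xy | lt_yx | eq_xy]; first by exists x, y.
  by exists y, x.
by move: x_neq_y; rewrite -val_eqE /= eq_xy eqxx.
Qed.

(* If every element of a nonempty finite set X has an R-predecessor in X and R
   is transitive, then some element of X is R-related to itself: walking back
   along predecessors must eventually come round in a loop. *)
Lemma descent_loop (T : finType) (R : rel T) (X : {set T}) :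
  transitive R -> (forall a, a \in X -> exists2 b, b \in X & R b a) ->
  X != set0 -> exists2 a, a \in X & R a a.
Proof.
move=> trR; have [n] := ubnP #|X|; elim: n X => // n IH X.
rewrite ltnS => card_X pred_X /set0Pn [x xX].
pose Z := [set b in X | R b x].
have [xZ | xNZ] := boolP (x \in Z).
  by exists x; move: xZ; rewrite inE => /andP [].
have [c cZ Rcc] : exists2 c, c \in Z & R c c.
  apply: IH.
  - apply: leq_trans card_X; apply: proper_card; apply/properP; split.
      by apply/subsetP => b; rewrite inE => /andP [].
    by exists x.
  - move=> a; rewrite inE => /andP [aX Rax].
    have [b bX Rba] := pred_X a aX.
    by exists b => //; rewrite inE bX (trR _ _ _ Rba Rax).
  - have [b bX Rbx] := pred_X x xX.
    by apply/set0Pn; exists b; rewrite inE bX.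
by exists c => //; move: cZ; rewrite inE => /andP [].
Qed.

Section FiniteMonoid.
Variables (T : finType) (mul : T -> T -> T) (one : T).

Lemma ideal_square_sub (I : {set T}) :
  two_sided_ideal mul I -> set_square mul I \subset I.
Proof.
move=> idI; apply/subsetP => z /imset2P [x y xI _ ->].
exact: (idI x y xI).2.
Qed.

Lemma set_square_mono (I J : {set T}) :
  I \subset J -> set_square mul I \subset set_square mul J.
Proof.
move=> IJ; apply/subsetP => z /imset2P [x y xI yI ->].
by apply/imset2P; exists x y; rewrite ?(subsetP IJ).
Qed.

(* A two-sided ideal that is a union of idempotent ideals is idempotent,
   since each of them lies in its square.  This gives both join and meet. *)
Lemma idempotent_ideal_cover (U : {set T}) :
  two_sided_ideal mul U ->
  (forall x, x \in U ->
     exists L, [/\ idempotent_ideal mul L, L \subset U & x \in L]) ->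
  idempotent_ideal mul U.
Proof.
move=> idU cover; split=> //.
apply/eqP; rewrite eqEsubset ideal_square_sub // andbT.
apply/subsetP => x /cover [L [[_ sqL] LU xL]].
by rewrite sqL in xL; exact: subsetP (set_square_mono LU) x xL.
Qed.

Lemma ideal_setU (I J : {set T}) :
  two_sided_ideal mul I -> two_sided_ideal mul J ->
  two_sided_ideal mul (I :|: J).
Proof.
move=> idI idJ x m; case/setUP => [/(idI x m) | /(idJ x m)] [mx xm].
  by rewrite !inE mx xm.
by rewrite !inE mx xm !orbT.
Qed.

Lemma ideal_bigcup (A : finType) (P : pred A) (F : A -> {set T}) :
  (forall i, P i -> two_sided_ideal mul (F i)) ->
  two_sided_ideal mul (\bigcup_(i | P i) F i).
Proof.
move=> idF x m /bigcupP [i Pi xF]; have [mx xm] := idF i Pi x m xF.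
by split; apply/bigcupP; exists i.
Qed.

Lemma principal_ideal_sub (e : T) (L : {set T}) :
  two_sided_ideal mul L -> e \in L -> principal_ideal mul e \subset L.
Proof.
move=> idL eL; apply/subsetP => z /imset2P [m n _ _ ->].
exact: (idL _ n (idL e m eL).1).2.
Qed.

Lemma ii_meet_sub (I J A : {set T}) :
  two_sided_ideal mul A -> I :&: J \subset A -> ii_meet mul I J \subset A.
Proof.
move=> idA IJ_A; apply/bigcupsP => e /andP [eIJ _].
exact: principal_ideal_sub idA (subsetP IJ_A e eIJ).
Qed.

Lemma ii_meet_setUr (I J K : {set T}) :
  ii_meet mul I (J :|: K) = ii_meet mul I J :|: ii_meet mul I K.
Proof.
apply/setP => x; apply/bigcupP/setUP.
- case=> e; rewrite !inE => /andP [/andP [eI /orP [eJ | eK]] ee] xe.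
    by left; apply/bigcupP; exists e; rewrite ?inE ?eI ?eJ.
  by right; apply/bigcupP; exists e; rewrite ?inE ?eI ?eK.
- by case=> /bigcupP [e]; rewrite !inE => /andP [/andP [eI eX] ee] xe;
    exists e; rewrite // !inE eI eX ?orbT.
Qed.

Hypothesis mulA : associative mul.
Hypothesis mul1 : left_id one mul.
Hypothesis mulr1 : right_id one mul.

Definition power (s : T) (n : nat) : T := iter n (mul s) one.

Lemma powerD (s : T) (a b : nat) :
  power s (a + b) = mul (power s a) (power s b).
Proof. by elim: a => [|a IH]; rewrite /power /= ?mul1 // -mulA -IH. Qed.

(* Every element of a finite monoid has an idempotent positive power: once
   the powers become periodic with period q, power s ((i+1) q) is idempotent. *)
Lemma idempotent_power (s : T) :
  exists2 m, 0 < m & mul (power s m) (power s m) = power s m.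
Proof.
have [i [j [lt_ij eq_ij]]] := finite_sequence_repeats (power s).
have period m : i <= m -> power s (m + (j - i)) = power s m.
  move=> le_im; have -> : m + (j - i) = (m - i) + j by lia.
  by rewrite powerD -eq_ij -powerD subnK.
have periodM t m : i <= m -> power s (m + t * (j - i)) = power s m.
  elim: t m => [|t IH] m le_im; first by rewrite addn0.
  by rewrite mulSn addnA IH ?period //; lia.
exists (i.+1 * (j - i)); first by rewrite muln_gt0 subn_gt0.
by rewrite -powerD periodM //; nia.
Qed.

Lemma power_in_ideal (I : {set T}) (s : T) (m : nat) :
  two_sided_ideal mul I -> s \in I -> 0 < m -> power s m \in I.
Proof. by move=> idI sI; case: m => // m _; exact: (idI s _ sI).2. Qed.

Lemma power_right_fixed (a s : T) (m : nat) :
  mul a s = a -> mul a (power s m) = a.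
Proof. by move=> a_s; elim: m => [|m IH]; rewrite /power /= ?mulr1 // mulA a_s. Qed.

Lemma idempotent_ideal_principal (I : {set T}) (x : T) :
  idempotent_ideal mul I -> x \in I ->
  exists2 e, e \in I /\ mul e e = e & x \in principal_ideal mul e.
Proof.
case=> idI sqI xI.
pose R := [rel b a | [exists s in I, a == mul b s]].
pose X := [set a in I | [exists c, x == mul a c]].
have trR : transitive R.
  move=> b c a /existsP [t /andP [tI /eqP ->]] /existsP [s /andP [sI /eqP ->]].
  by apply/existsP; exists (mul t s); rewrite mulA eqxx (idI t s tI).2.
have pred_X a : a \in X -> exists2 b, b \in X & R b a.
  rewrite inE => /andP [aI /existsP [c /eqP x_ac]].
  move: aI x_ac; rewrite {1}sqI => /imset2P [b s bI sI ->] x_bsc.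
  exists b; last by apply/existsP; exists s; rewrite sI eqxx.
  by rewrite inE bI; apply/existsP; exists (mul s c); rewrite x_bsc mulA.
have X0 : X != set0.
  by apply/set0Pn; exists x; rewrite inE xI; apply/existsP; exists one; rewrite mulr1.
have [a] := descent_loop trR pred_X X0.
rewrite inE => /andP [_ /existsP [c /eqP x_ac]] /existsP [s /andP [sI /eqP a_as]].
have [m m_gt0 idem] := idempotent_power s.
exists (power s m); first by rewrite power_in_ideal.
by apply/imset2P; exists a c; rewrite // power_right_fixed // -a_as.
Qed.

(* For e idempotent, M e M is an idempotent ideal: m e n = (m e) (e n). *)
Lemma principal_ideal_idempotent (e : T) :
  mul e e = e -> idempotent_ideal mul (principal_ideal mul e).
Proof.
move=> ee.
have idP : two_sided_ideal mul (principal_ideal mul e).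
  move=> _ k /imset2P [m n _ _ ->]; split; apply/imset2P.
    by exists (mul k m) n; rewrite // !mulA.
  by exists m (mul n k); rewrite // -!mulA.
split=> //; apply/eqP; rewrite eqEsubset ideal_square_sub // andbT.
apply/subsetP => _ /imset2P [m n _ _ ->].
apply/imset2P; exists (mul m e) (mul e n).
- by apply/imset2P; exists m one; rewrite ?mulr1.
- by apply/imset2P; exists one n; rewrite ?mul1.
- by rewrite mulA -(mulA m e e) ee.
Qed.

Lemma ii_meet_idempotent (I J : {set T}) :
  idempotent_ideal mul (ii_meet mul I J).
Proof.
apply: idempotent_ideal_cover.
  by apply: ideal_bigcup => e /andP [_ /eqP /principal_ideal_idempotent []].
move=> x /bigcupP [e e_meet xe]; exists (principal_ideal mul e); split=> //.
  by case/andP: e_meet => _ /eqP /principal_ideal_idempotent.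
exact: (bigcup_sup e e_meet).
Qed.

Lemma ii_meet_greatest (I J L : {set T}) :
  idempotent_ideal mul L -> L \subset I -> L \subset J ->
  L \subset ii_meet mul I J.
Proof.
move=> iiL LI LJ; apply/subsetP => x xL.
have [e [eL ee] xe] := idempotent_ideal_principal iiL xL.
by apply/bigcupP; exists e; rewrite // !inE (subsetP LI) ?(subsetP LJ) ?ee ?eqxx.
Qed.

Lemma ii_join_idempotent (I J : {set T}) :
  idempotent_ideal mul I -> idempotent_ideal mul J ->
  idempotent_ideal mul (I :|: J).
Proof.
move=> iiI iiJ; apply: idempotent_ideal_cover.
  by apply: ideal_setU; [case: iiI | case: iiJ].
move=> x /setUP [xI | xJ]; first by exists I; rewrite subsetUl.
by exists J; rewrite subsetUr.
Qed.

End FiniteMonoid.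

Theorem corollary4p9 (T : finType) (mul : T -> T -> T) (one : T) :
  is_monoid mul one ->
  forall I J K : {set T},
    idempotent_ideal mul I -> idempotent_ideal mul J -> idempotent_ideal mul K ->
    (* join: I :|: J is an idempotent ideal, the least upper bound in II(M) *)
    (idempotent_ideal mul (I :|: J) /\
     (I \subset I :|: J) /\ (J \subset I :|: J) /\
     (forall L : {set T}, idempotent_ideal mul L ->
        I \subset L -> J \subset L -> I :|: J \subset L)) /\
    (* meet: the union of M e M over idempotents e of I :&: J is an idempotent
       ideal, the greatest lower bound in II(M) *)
    (idempotent_ideal mul (ii_meet mul I J) /\
     (ii_meet mul I J \subset I) /\ (ii_meet mul I J \subset J) /\
     (forall L : {set T}, idempotent_ideal mul L ->
        L \subset I -> L \subset J -> L \subset ii_meet mul I J)) /\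
    (* distributivity *)
    ii_meet mul I (J :|: K) = ii_meet mul I J :|: ii_meet mul I K.
Proof.
case=> mulA mul1 mulr1 I J K iiI iiJ _.
have [[idI _] [idJ _]] := (iiI, iiJ).
split; [|split; last exact: ii_meet_setUr].
- split; first exact: ii_join_idempotent.
  split; first exact: subsetUl.
  split; first exact: subsetUr.
  by move=> L _ IL JL; rewrite subUset IL JL.
- split; first exact: ii_meet_idempotent.
  split; first by apply: ii_meet_sub idI _; apply: subsetIl.
  split; first by apply: ii_meet_sub idJ _; apply: subsetIr.
  by move=> L iiL; apply: ii_meet_greatest.
Qed.
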